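(* Let $R$ be a commutative ring which is free as an abelian group with $\mathbb{Z}$-basis $V$, let $n\ge2$, $p$ a prime and $r\ge1$. Then $$\Gamma(SL_n(R),p^r)/\Gamma(SL_n(R),p^{r+1})\cong\bigoplus_{n^2-1}\mathbb{F}_p[V].$$
   Context: $\Gamma(SL_n(R),p^m)=\ker\big(SL_n(R)\to SL_n(R\otimes_{\mathbb{Z}}\mathbb{Z}/p^m)\big)$. $\mathbb{F}_p[V]$ denotes the $\mathbb{F}_p$-vector space with basis $V$ (equivalently the additive group of $R/pR$); the right-hand side is a direct sum of $n^2-1$ copies. *)

From mathcomp Require Import all_boot all_order all_algebra.
Set Implicit Arguments. Unset Strict Implicit. Unset Printing Implicit Defensive.
Import GRing.Theory.
Local Open Scope ring_scope.

Definition is_Zbasis (R : comRingType) (V : eqType) (b : V -> R) : Prop :=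
  (forall x : R, exists (s : seq V) (c : V -> int),
      x = \sum_(v <- s) (b v *~ c v)) /\
  (forall (s : seq V) (c : V -> int), uniq s ->
      \sum_(v <- s) (b v *~ c v) = 0 -> forall v, v \in s -> c v = 0).

(* Gamma(SL_n(R), q) = kernel of SL_n(R) -> SL_n(R (x)_Z Z/q) = SL_n(R/qR):
   determinant 1 and A = 1 entrywise modulo q R. *)
Definition in_Gamma (R : comRingType) (n q : nat) (A : 'M[R]_n) : Prop :=
  \det A = 1 /\
  forall i j, exists y : R, (A - 1%:M) i j = q%:R * y.

(* finitely supported functions V -> F_p : elements of F_p[V] *)
Definition fin_supp (V : eqType) (K : nmodType) (f : V -> K) : Prop :=
  exists s : seq V, forall v, v \notin s -> f v = 0.

(* [phi] induces a group isomorphism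
     Gamma(q1) / Gamma(q2)  ~=  (+)_{i < k} F_p[V]
   (first isomorphism theorem form): phi is a homomorphism from Gamma(q1)
   into the direct sum of k copies of F_p[V], onto it, with kernel Gamma(q2). *)
Definition induces_quotient_iso (R : comRingType) (n q1 q2 : nat)
    (V : eqType) (K : zmodType) (k : nat)
    (phi : 'M[R]_n -> 'I_k -> V -> K) : Prop :=
  [/\ (forall A, in_Gamma q1 A -> forall i, fin_supp (phi A i)),
      (forall A B, in_Gamma q1 A -> in_Gamma q1 B ->
          forall i v, phi (A *m B) i v = phi A i v + phi B i v),
      (forall A, in_Gamma q1 A ->
          ((forall i v, phi A i v = 0) <-> in_Gamma q2 A)) &
      (forall f : 'I_k -> V -> K, (forall i, fin_supp (f i)) ->
          exists A, in_Gamma q1 A /\ forall i v, phi A i v = f i v)].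

From HB Require Import structures.
From mathcomp Require Import all_boot all_order all_fingroup all_algebra ring zify.
From Stdlib Require Import ClassicalEpsilon.
Set Implicit Arguments. Unset Strict Implicit. Unset Printing Implicit Defensive.
Import GRing.Theory Num.Theory.
Local Open Scope ring_scope.

(* Write A in Gamma(p^r) as A = 1 + p^r Y.  Since
   (1 + p^r Y)(1 + p^r Z) = 1 + p^r (Y + Z) mod p^(2r), reducing modulo p the
   coordinates (in the Z-basis) of the entries of Y is a homomorphism, whose
   kernel is Gamma(p^(r+1)); cancelling p^r is legitimate because R is
   torsion-free.  As det (1 + p^r Y) = 1 + p^r tr Y mod p^(2r), the trace of Y
   vanishes modulo p, so the last diagonal entry is determined by the others
   and n^2 - 1 entries suffice.  Every coordinate is reached separately:
   off-diagonal ones by elementary matrices 1 + p^r x e_ij, diagonal ones by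
   conjugating an elementary matrix. *)

Section RingDivisibility.
Variable R : comPzRingType.

Definition dvdr (c x : R) : Prop := exists y, x = c * y.

Lemma dvdr0 c : dvdr c 0.
Proof. by exists 0; rewrite mulr0. Qed.

Lemma dvdrD c x y : dvdr c x -> dvdr c y -> dvdr c (x + y).
Proof. by move=> [x' ->] [y' ->]; exists (x' + y'); rewrite mulrDr. Qed.

Lemma dvdrN c x : dvdr c x -> dvdr c (- x).
Proof. by move=> [x' ->]; exists (- x'); rewrite mulrN. Qed.

Lemma dvdrMl c x y : dvdr c x -> dvdr c (y * x).
Proof. by move=> [x' ->]; exists (y * x'); rewrite mulrCA. Qed.

Lemma dvdr_sum c (I : Type) (s : seq I) (P : pred I) (F : I -> R) :
  (forall i, P i -> dvdr c (F i)) -> dvdr c (\sum_(i <- s | P i) F i).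
Proof. by move=> dF; apply: big_ind => //; [exact: dvdr0 | exact: dvdrD]. Qed.

Lemma dvdr_trans c d x : dvdr c d -> dvdr d x -> dvdr c x.
Proof. by move=> [d' ->] [x' ->]; exists (d' * x'); rewrite mulrA. Qed.

Lemma dvdr_nat (m m' : nat) : (m %| m')%N -> dvdr m%:R m'%:R.
Proof. by move=> /dvdnP[k ->]; exists k%:R; rewrite natrM mulrC. Qed.

Lemma prod1D_lin n (q : R) (y : 'I_n -> R) :
  dvdr (q * q) (\prod_(i < n) (1 + q * y i) - 1 - q * \sum_(i < n) y i).
Proof.
elim: n y => [|n IH] y; first by rewrite !big_ord0; exists 0; ring.
rewrite big_ord_recr big_ord_recr /=.
have [z ez] := IH (fun i => y (widen_ord (leqnSn n) i)).
set P := \prod_(i < n) _ in ez *; set S := \sum_(i < n) _ in ez *.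
have -> : P = 1 + q * S + q * q * z by rewrite -ez; ring.
by exists (z + S * y ord_max + q * z * y ord_max); ring.
Qed.

(* Only the identity permutation avoids the off-diagonal entries, each of which
   is a multiple of [q]; every other term of the Leibniz formula uses two. *)
Lemma det1Z_lin n (q : R) (Y : 'M[R]_n) :
  dvdr (q * q) (\det (1%:M + q *: Y) - 1 - q * \tr Y).
Proof.
rewrite /determinant (bigD1 (1%g : 'S_n)) //= odd_perm1 expr0 mul1r.
under eq_bigr do rewrite perm1 !mxE eqxx mulr1n.
set S := \sum_(s | s != 1%g) _.
have -> : \prod_(i < n) (1 + q * Y i i) + S - 1 - q * \tr Y =
          (\prod_(i < n) (1 + q * Y i i) - 1 - q * \sum_i Y i i) + S.
  by rewrite /mxtrace; ring.
apply: dvdrD; first exact: prod1D_lin.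
apply: dvdr_sum => s s1; apply: dvdrMl.
have [i si] : exists i, s i != i.
  apply/existsP; apply: contraR s1 => /existsPn s_id; apply/eqP/permP => i.
  by rewrite perm1; apply/eqP/negPn/s_id.
have ssi : s (s i) != s i by apply: contra si => /eqP/perm_inj->.
rewrite (bigD1 i) // (bigD1 (s i)) //= !mxE eq_sym (negbTE si).
rewrite eq_sym (negbTE ssi) !mulr0n !add0r.
by eexists; rewrite -!mulrA; congr (_ * _); rewrite mulrCA.
Qed.

End RingDivisibility.

Section CongruenceSubgroup.
Variables (R : comRingType) (n : nat).
Implicit Types (A B Y Z : 'M[R]_n) (m : nat).

Lemma in_GammaP m A : in_Gamma m A -> exists Y, A - 1%:M = m%:R *: Y.
Proof.
case=> _ dvdA.
have /fin_all_exists [Y eY] : forall i, exists Yi : 'I_n -> R,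
  forall j, (A - 1%:M) i j = m%:R * Yi j := fun i => fin_all_exists (dvdA i).
by exists (\matrix_(i, j) Y i j); apply/matrixP => i j; rewrite eY !mxE.
Qed.

Lemma in_GammaI m A Y : \det A = 1 -> A - 1%:M = m%:R *: Y -> in_Gamma m A.
Proof. by move=> detA eA; split=> // i j; exists (Y i j); rewrite eA mxE. Qed.

Lemma mulmx_sub1 (q : R) A B Y Z : A - 1%:M = q *: Y -> B - 1%:M = q *: Z ->
  A *m B - 1%:M = q *: (Y + Z + q *: (Y *m Z)).
Proof.
move=> /eqP; rewrite subr_eq addrC => /eqP ->.
move=> /eqP; rewrite subr_eq addrC => /eqP ->.
rewrite mulmxDl !mulmxDr !mul1mx mulmx1 -scalemxAl -scalemxAr.
by apply/matrixP => i j; rewrite !mxE; ring.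
Qed.

Lemma in_Gamma_mulmx m A B : in_Gamma m A -> in_Gamma m B -> in_Gamma m (A *m B).
Proof.
move=> GA GB; have [Y eY] := in_GammaP GA; have [Z eZ] := in_GammaP GB.
by apply: in_GammaI (mulmx_sub1 eY eZ); rewrite det_mulmx GA.1 GB.1 mulr1.
Qed.

Definition elem_mx (i j : 'I_n) (c : R) : 'M[R]_n := 1%:M + c *: delta_mx i j.

Lemma elem_mx_sub1 i j c : elem_mx i j c - 1%:M = c *: delta_mx i j.
Proof. by rewrite /elem_mx addrC addKr. Qed.

Lemma trmx_elem i j c : (elem_mx i j c)^T = elem_mx j i c.
Proof. by rewrite /elem_mx linearD /= trmx1 linearZ /= trmx_delta. Qed.

Lemma det_elem_mx i j c : i != j -> \det (elem_mx i j c) = 1.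
Proof.
wlog lt_ji : i j / (j < i)%N => [wlog_lt ij|ij].
  case: (ltngtP i j) => [lt_ij|lt_ji|/val_inj eq_ij]; last by rewrite eq_ij eqxx in ij.
  - by rewrite -det_tr trmx_elem wlog_lt // eq_sym.
  - exact: wlog_lt.
rewrite det_trig.
- rewrite big1 // => a _; rewrite !mxE eqxx mulr1n.
  suff /negbTE-> : ~~ ((a == i) && (a == j)) by rewrite mulr0 addr0.
  by apply: contra ij => /andP[/eqP <- /eqP <-].
- apply/forallP => a; apply/forallP => c'; apply/implyP => lt_ac; rewrite !mxE.
  have /negbTE-> : a != c' by rewrite neq_ltn lt_ac.
  rewrite add0r.
  suff /negbTE-> : ~~ ((a == i) && (c' == j)) by rewrite mulr0.
  by apply/negP => /andP[/eqP ai /eqP cj]; move: lt_ac lt_ji; rewrite ai cj; lia.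
Qed.

Lemma elem_mx_conj i j c : i != j ->
  elem_mx i j 1 *m elem_mx j i c *m elem_mx i j (-1) =
  1%:M + c *: (delta_mx j i + delta_mx i i - delta_mx j j - delta_mx i j).
Proof.
move=> ij; rewrite /elem_mx.
rewrite !(mulmxDl, mulmxDr, mul1mx, mulmx1, mul_delta_mx_cond, =^~ scalemxAl,
          =^~ scalemxAr, eqxx, mulr1n) eq_sym (negbTE ij) mulr0n.
by apply/matrixP => a b; rewrite !mxE; ring.
Qed.

End CongruenceSubgroup.

Lemma big_uniq_supp (R : nmodType) (I : eqType) (s s' : seq I) (F : I -> R) :
  uniq s -> uniq s' -> {subset s <= s'} -> (forall i, i \notin s -> F i = 0) ->
  \sum_(i <- s') F i = \sum_(i <- s) F i.
Proof.
move=> us us' ss' F0; rewrite (bigID (mem s)) /= [X in _ + X]big1 ?addr0; last first.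
  by move=> i /F0.
rewrite -big_filter; apply/perm_big/uniq_perm => [||i]; rewrite ?filter_uniq //.
by rewrite mem_filter andb_idr //; apply: ss'.
Qed.

Section IntegralBasis.
Variables (R : comRingType) (V : eqType) (b : V -> R).
Hypothesis b_basis : is_Zbasis b.

Definition expansion (x : R) (s : seq V) (c : V -> int) : Prop :=
  [/\ uniq s, forall v, v \notin s -> c v = 0 & x = \sum_(v <- s) b v *~ c v].

Lemma expansionD x y s t c d : expansion x s c -> expansion y t d ->
  expansion (x + y) (undup (s ++ t)) (fun v => c v + d v).
Proof.
case=> us c0 ex [ut d0 ey]; split; first exact: undup_uniq.
  by move=> v; rewrite mem_undup mem_cat negb_or => /andP[/c0-> /d0->].
under eq_bigr do rewrite mulrzDr.
rewrite big_split /= ex ey; congr (_ + _); symmetry; apply: big_uniq_supp;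
  rewrite ?undup_uniq // => v; rewrite ?mem_undup ?mem_cat.
- by move=> ->.
- by move/c0->; rewrite mulr0z.
- by move=> ->; rewrite orbT.
- by move/d0->; rewrite mulr0z.
Qed.

Lemma expansionZ x s c (k : int) :
  expansion x s c -> expansion (x *~ k) s (fun v => c v * k).
Proof.
case=> us c0 ex; split=> // [v /c0->|]; first by rewrite mul0r.
by rewrite ex mulrz_suml; apply: eq_bigr => v _; rewrite mulrzA.
Qed.

Lemma expansion_exists x : exists c s, expansion x s c.
Proof.
have [s [c ->]] := b_basis.1 x; elim: s => [|a s [d [t IH]]].
  by exists (fun=> 0), [::]; split; rewrite ?big_nil.
have ba : expansion (b a *~ c a) [:: a] (fun v => if v == a then c a else 0).
  by split=> // [v|]; rewrite ?inE ?big_seq1 ?eqxx // => /negbTE->.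
by rewrite big_cons; eexists; eexists; apply: expansionD ba IH.
Qed.

Lemma expansion_unique x s t c d :
  expansion x s c -> expansion x t d -> c =1 d.
Proof.
move=> ex ey v; have [ust cd0] := expansionD ex (expansionZ (-1) ey).
rewrite mulrNz mulr1z subrr => /esym cd_sum.
apply/eqP; rewrite -subr_eq0 -mulrN1; apply/eqP.
by have [|/cd0] := boolP (v \in undup (s ++ t)); first exact: b_basis.2 ust cd_sum v.
Qed.

Definition zcoord (v : V) (x : R) : int :=
  proj1_sig (constructive_indefinite_description _ (expansion_exists x)) v.

Lemma zcoordP x : exists s, expansion x s (zcoord^~ x).
Proof. exact: proj2_sig (constructive_indefinite_description _ (expansion_exists x)). Qed.

Lemma zcoord_expansion x s c : expansion x s c -> forall v, zcoord v x = c v.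
Proof. by move=> ex v; have [t ex'] := zcoordP x; exact: (expansion_unique ex' ex v). Qed.

Fact zcoord_is_zmod_morphism v : zmod_morphism (zcoord v).
Proof.
move=> x y; have [s ex] := zcoordP x; have [t ey] := zcoordP y.
rewrite -mulrN1z (zcoord_expansion (expansionD ex (expansionZ (-1) ey))).
by rewrite mulrN1.
Qed.

HB.instance Definition _ v :=
  GRing.isZmodMorphism.Build R int (zcoord v) (zcoord_is_zmod_morphism v).

Lemma zcoord_inj x y : (forall v, zcoord v x = zcoord v y) -> x = y.
Proof.
move=> cxy; apply/eqP; rewrite -subr_eq0; apply/eqP.
have [s [_ _ ->]] := zcoordP (x - y).
by rewrite big1 // => v _; rewrite raddfB /= cxy subrr mulr0z.
Qed.

Lemma zcoord_fin_supp x : fin_supp (zcoord^~ x).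
Proof. by have [s [_ c0 _]] := zcoordP x; exists s. Qed.

Lemma zcoord_lift (c : V -> int) : fin_supp c -> exists x, forall v, zcoord v x = c v.
Proof.
case=> s c0; exists (\sum_(v <- undup s) b v *~ c v).
apply: zcoord_expansion; split=> //; first exact: undup_uniq.
by move=> v; rewrite mem_undup; apply: c0.
Qed.

Lemma natr_lreg m : (0 < m)%N -> GRing.lreg (m%:R : R).
Proof.
move=> m_gt0 x y mxy; apply: zcoord_inj => v.
have /(congr1 (zcoord v)) : x *+ m = y *+ m by rewrite -mulr_natl mxy mulr_natl.
rewrite !raddfMn /= -!(mulr_natr (zcoord v _)); apply: mulIf.
by rewrite pnatr_eq0 -lt0n.
Qed.

Lemma dvdr_zcoord m x :
  (0 < m)%N -> dvdr m%:R x <-> forall v, (m %| zcoord v x)%Z.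
Proof.
move=> m_gt0; split=> [[y ->] v|m_dvd].
  by rewrite mulr_natl raddfMn /= -mulr_natr natz; apply/dvdz_mull/dvdzz.
have [s [_ _ ->]] := zcoordP x.
exists (\sum_(v <- s) b v *~ (zcoord v x %/ m)%Z).
rewrite mulr_sumr; apply: eq_bigr => v _.
by rewrite mulr_natl pmulrn -mulrzA divzK.
Qed.

Lemma dvdr_trace_level n m (A Y : 'M[R]_n) :
  (0 < m)%N -> \det A = 1 -> A - 1%:M = m%:R *: Y -> dvdr m%:R (\tr Y).
Proof.
move=> m_gt0 detA eA; have [w] := det1Z_lin m%:R Y.
have -> : 1%:M + m%:R *: Y = A by rewrite -eA addrC subrK.
rewrite detA subrr add0r -mulrA -mulrN => /(natr_lreg m_gt0) trY.
by exists (- w); rewrite mulrN -trY opprK.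
Qed.

End IntegralBasis.

Section PrimeCoordinates.
Variables (R : comRingType) (V : eqType) (b : V -> R).
Hypothesis b_basis : is_Zbasis b.
Variable p : nat.
Hypothesis p_prime : prime p.

Definition coordFp (v : V) (x : R) : 'F_p := (zcoord b_basis v x)%:~R.

Fact coordFp_is_zmod_morphism v : zmod_morphism (coordFp v).
Proof. by move=> x y; rewrite /coordFp raddfB intrB. Qed.

HB.instance Definition _ v :=
  GRing.isZmodMorphism.Build R 'F_p (coordFp v) (coordFp_is_zmod_morphism v).

Lemma coordFp_fin_supp x : fin_supp (coordFp^~ x).
Proof. by have [s c0] := zcoord_fin_supp b_basis x; exists s => v /c0; rewrite /coordFp => ->. Qed.

Lemma coordFp_eq0 x : (forall v, coordFp v x = 0) <-> dvdr p%:R x.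
Proof.
rewrite (dvdr_zcoord b_basis) ?prime_gt0 //.
have pcharFp := dvdz_pcharf (pchar_Fp p_prime).
by split=> x0 v; [rewrite pcharFp; apply/eqP; apply: x0 | apply/eqP; rewrite -pcharFp].
Qed.

Lemma coordFp_lift (g : V -> 'F_p) : fin_supp g -> exists x, forall v, coordFp v x = g v.
Proof.
case=> s g0; have [|x cx] := @zcoord_lift _ _ _ b_basis (fun v => (val (g v))%:Z).
  by exists s => v /g0 ->.
by exists x => v; rewrite /coordFp cx; apply: natr_Zp.
Qed.

End PrimeCoordinates.

Section PairIndex.
Variable n : nat.
Local Notation N := (n.+1 ^ 2 - 1)%N.

(* Row-major enumeration of the entries other than the last diagonal one. *)
Definition row_of (k : 'I_N) : 'I_n.+1 := inord (k %/ n.+1).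
Definition col_of (k : 'I_N) : 'I_n.+1 := inord (k %% n.+1).

Lemma index_boundE : N = (n * n.+1 + n)%N.
Proof. by rewrite expnS expn1; lia. Qed.

Lemma ltn_index (k : 'I_N) : (k < n * n.+1 + n)%N.
Proof. by rewrite -index_boundE. Qed.

Lemma row_ofE k : row_of k = (k %/ n.+1)%N :> nat.
Proof. by rewrite inordK // ltnS -ltnS ltn_divLR //; have := ltn_index k; lia. Qed.

Lemma col_ofE k : col_of k = (k %% n.+1)%N :> nat.
Proof. by rewrite inordK // ltn_pmod. Qed.

Lemma pair_of_index_neq_max k : (row_of k != ord_max) || (col_of k != ord_max).
Proof.
rewrite -negb_and; apply/andP => -[/eqP/(congr1 val) /=].
rewrite row_ofE => kr /eqP/(congr1 val) /=; rewrite col_ofE => kc.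
by have := ltn_index k; rewrite {1}(divn_eq k n.+1) kr kc; lia.
Qed.

Lemma index_of_pair i j : (i != ord_max) || (j != ord_max) ->
  exists k : 'I_N, row_of k = i /\ col_of k = j.
Proof.
move=> ij; have lt_ij : (i * n.+1 + j < N)%N.
  rewrite index_boundE; have := ltn_ord i; have := ltn_ord j.
  have [i_n|n_i] := ltnP i n; first by nia.
  have [j_n|n_j] := ltnP j n; first by nia.
  by case/orP: ij => /eqP ne ? ?; case: ne; apply: val_inj => /=; lia.
exists (Ordinal lt_ij); split; apply: val_inj; rewrite /= ?row_ofE ?col_ofE /=.
- by rewrite divnMDl // divn_small ?addn0.
- by rewrite modnMDl modn_small.
Qed.

Lemma eq_pair_index k k' :
  (row_of k' == row_of k) && (col_of k' == col_of k) = (k' == k).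
Proof.
apply/idP/eqP => [/andP[/eqP/(congr1 val) kr /eqP/(congr1 val) kc] | -> ]; last by rewrite !eqxx.
apply: val_inj; move: kr kc; rewrite /= !row_ofE !col_ofE => kr kc.
by rewrite (divn_eq k n.+1) (divn_eq k' n.+1) kr kc.
Qed.

End PairIndex.

Section FirstLayer.
Variables (R : comRingType) (V : eqType) (b : V -> R).
Hypothesis b_basis : is_Zbasis b.
Variables (n p r : nat).
Hypotheses (p_prime : prime p) (r_gt0 : (0 < r)%N).
Local Notation q := (p ^ r)%N.
Local Notation N := (n.+1 ^ 2 - 1)%N.
Local Notation coordFp := (coordFp b_basis p).
Local Notation L := (@ord_max n).

Lemma q_gt0 : (0 < q)%N.
Proof. by rewrite expn_gt0 prime_gt0. Qed.

Lemma dvdr_p_q : dvdr (p%:R : R) q%:R.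
Proof. exact/dvdr_nat/dvdn_exp. Qed.

Definition layer_coord (A : 'M[R]_n.+1) (k : 'I_N) (v : V) : 'F_p :=
  ((zcoord b_basis v ((A - 1%:M) (row_of k) (col_of k)) %/ q)%Z)%:~R.

Lemma layer_coordE A Y k v : A - 1%:M = q%:R *: Y ->
  layer_coord A k v = coordFp v (Y (row_of k) (col_of k)).
Proof.
move=> eA; rewrite /layer_coord eA mxE mulr_natl raddfMn /= pmulrn mulrzz mulzK //.
by rewrite lt0r_neq0 // ltz_nat q_gt0.
Qed.

Lemma layer_coordM A B : in_Gamma q A -> in_Gamma q B ->
  forall k v, layer_coord (A *m B) k v = layer_coord A k v + layer_coord B k v.
Proof.
move=> GA GB k v; have [Y eY] := in_GammaP GA; have [Z eZ] := in_GammaP GB.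
rewrite (layer_coordE _ _ (mulmx_sub1 eY eZ)) !(layer_coordE _ _ eY, layer_coordE _ _ eZ).
have coordFp_q w : coordFp v (q%:R * w) = 0.
  by move: v; apply/(coordFp_eq0 b_basis p_prime)/(dvdr_trans dvdr_p_q); eexists.
by rewrite !mxE !raddfD /= coordFp_q addr0.
Qed.

Lemma layer_coord_fin_supp A : in_Gamma q A -> forall k, fin_supp (layer_coord A k).
Proof.
move=> GA k; have [Y eY] := in_GammaP GA.
have [s s0] := coordFp_fin_supp b_basis p (Y (row_of k) (col_of k)).
by exists s => v /s0; rewrite (layer_coordE _ _ eY).
Qed.

Lemma layer_coord_eq0 A : in_Gamma q A ->
  (forall k v, layer_coord A k v = 0) <-> in_Gamma (p ^ r.+1) A.
Proof.
move=> GA; have [Y eY] := in_GammaP GA.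
have layer0 k : (forall v, layer_coord A k v = 0) <-> dvdr p%:R (Y (row_of k) (col_of k)).
  rewrite -(coordFp_eq0 b_basis p_prime).
  by split=> Y0 v; [rewrite -(layer_coordE _ _ eY) | rewrite (layer_coordE _ _ eY)].
split=> [A0 | GA' k]; last first.
  have [y ey] := GA'.2 (row_of k) (col_of k); apply/layer0; exists y.
  by apply: (natr_lreg b_basis q_gt0); rewrite mulrA -natrM -expnSr -ey eY mxE.
have Yp_offmax i j : (i != L) || (j != L) -> dvdr p%:R (Y i j).
  by case/index_of_pair => k [<- <-]; apply/layer0.
(* The entry [Y L L] is not seen by [layer_coord]; it is recovered from the trace. *)
have YpLL : dvdr p%:R (Y L L).
  have : dvdr p%:R (\tr Y - \sum_(i | i != L) Y i i).
    apply: dvdrD; first exact: dvdr_trans dvdr_p_q (dvdr_trace_level b_basis q_gt0 GA.1 eY).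
    by apply/dvdrN/dvdr_sum => i iL; apply: Yp_offmax; rewrite iL.
  by rewrite /mxtrace (bigD1 L) //= addrK.
split=> [|i j]; first exact: GA.1.
have [y ey] : dvdr p%:R (Y i j).
  have [/andP[/eqP-> /eqP->] //|ijL] := boolP ((i == L) && (j == L)).
  by apply: Yp_offmax; rewrite -negb_and.
by exists y; rewrite eY mxE ey expnSr natrM mulrA.
Qed.

Lemma coordFp_delta (k k' : 'I_N) (x : R) v :
  coordFp v ((x *: delta_mx (row_of k) (col_of k)) (row_of k') (col_of k')) =
  coordFp v x *+ (k' == k).
Proof. by rewrite !mxE eq_pair_index mulr_natr raddfMn. Qed.

Lemma layer_coord_offdiag (i j : 'I_n.+1) (x : R) : i != j -> exists M, in_Gamma q M /\
  forall k v, layer_coord M k v = coordFp v ((x *: delta_mx i j) (row_of k) (col_of k)).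
Proof.
move=> ij; have eM : elem_mx i j (q%:R * x) - 1%:M = q%:R *: (x *: delta_mx i j).
  by rewrite elem_mx_sub1 scalerA.
exists (elem_mx i j (q%:R * x)); split; first exact: in_GammaI (det_elem_mx _ ij) eM.
by move=> k v; rewrite (layer_coordE _ _ eM).
Qed.

(* The diagonal entry is produced by conjugating an elementary matrix, which
   also creates off-diagonal entries that two further elementary matrices remove. *)
Lemma layer_coord_diag (i : 'I_n.+1) (x : R) : i != L -> exists M, in_Gamma q M /\
  forall k v, layer_coord M k v = coordFp v ((x *: delta_mx i i) (row_of k) (col_of k)).
Proof.
move=> iL; have Li : L != i by rewrite eq_sym.
set D := elem_mx i L 1 *m elem_mx L i (q%:R * x) *m elem_mx i L (-1).
have eD : D - 1%:M = q%:R *: (x *: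
    (delta_mx L i + delta_mx i i - delta_mx L L - delta_mx i L)).
  by rewrite /D elem_mx_conj // addrC addKr scalerA.
have GD : in_Gamma q D.
  by apply: in_GammaI eD; rewrite /D !det_mulmx !det_elem_mx // !mulr1.
have e1 : elem_mx i L (q%:R * x) - 1%:M = q%:R *: (x *: delta_mx i L).
  by rewrite elem_mx_sub1 scalerA.
have e2 : elem_mx L i (q%:R * - x) - 1%:M = q%:R *: ((- x) *: delta_mx L i).
  by rewrite elem_mx_sub1 scalerA.
have G1 := in_GammaI (det_elem_mx _ iL) e1; have G2 := in_GammaI (det_elem_mx _ Li) e2.
exists (D *m elem_mx i L (q%:R * x) *m elem_mx L i (q%:R * - x)).
split=> [|k v]; first exact: in_Gamma_mulmx (in_Gamma_mulmx GD G1) G2.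
rewrite (layer_coordM (in_Gamma_mulmx GD G1) G2) (layer_coordM GD G1).
rewrite (layer_coordE _ _ eD) (layer_coordE _ _ e1) (layer_coordE _ _ e2) -!raddfD /=.
congr (coordFp v _); rewrite !mxE.
have /negbTE-> : ~~ ((row_of k == L) && (col_of k == L)).
  by rewrite negb_and pair_of_index_neq_max.
by rewrite /= mulr0n subr0; ring.
Qed.

Lemma layer_coord_delta (k : 'I_N) (x : R) : exists M, in_Gamma q M /\
  forall k' v, layer_coord M k' v = coordFp v x *+ (k' == k).
Proof.
have [M [GM eM]] : exists M, in_Gamma q M /\ forall k' v,
    layer_coord M k' v = coordFp v ((x *: delta_mx (row_of k) (col_of k)) (row_of k') (col_of k')).
  have [ij|] := eqVneq (row_of k) (col_of k); last exact: layer_coord_offdiag.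
  rewrite -ij; apply: layer_coord_diag.
  by have := pair_of_index_neq_max k; rewrite -ij orbb.
by exists M; split=> // k' v; rewrite eM coordFp_delta.
Qed.

Lemma layer_coord_surj (f : 'I_N -> V -> 'F_p) : (forall k, fin_supp (f k)) ->
  exists A, in_Gamma q A /\ forall k v, layer_coord A k v = f k v.
Proof.
move=> f_supp; have /fin_all_exists [M eM] k : exists M, in_Gamma q M /\
    forall k' v, layer_coord M k' v = f k v *+ (k' == k).
  have [x ex] := coordFp_lift b_basis (f_supp k).
  have [M [GM eM]] := layer_coord_delta k x.
  by exists M; split=> // k' v; rewrite eM ex.
have layer_prod (s : seq 'I_N) : in_Gamma q (\prod_(k <- s) M k) /\
    forall k' v, layer_coord (\prod_(k <- s) M k) k' v = \sum_(k <- s) f k v *+ (k' == k).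
  elim: s => [|k s [Gs es]]; rewrite ?big_nil ?big_cons.
    have e1 : (1 : 'M[R]_n.+1) - 1%:M = q%:R *: 0 by rewrite subrr scaler0.
    split=> [|k' v]; first exact: in_GammaI (det1 _ _) e1.
    by rewrite (layer_coordE _ _ e1) mxE raddf0 big_nil.
  split=> [|k' v]; first exact: in_Gamma_mulmx (eM k).1 Gs.
  by rewrite (layer_coordM (eM k).1 Gs) (eM k).2 es big_cons.
have [GA eA] := layer_prod (index_enum 'I_N).
exists (\prod_k M k); split=> // k v; rewrite eA (bigD1 k) //= eqxx big1 ?addr0 //.
by move=> k' /negbTE; rewrite eq_sym => ->.
Qed.

End FirstLayer.

Theorem lemma3p7 (R : comRingType) (V : eqType) (b : V -> R)
    (n p r : nat) :
  is_Zbasis b -> (2 <= n)%N -> prime p -> (1 <= r)%N ->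
  exists phi : 'M[R]_n -> 'I_(n ^ 2 - 1) -> V -> 'F_p,
    induces_quotient_iso (p ^ r) (p ^ r.+1) phi.
Proof.
move=> b_basis n_ge2 p_prime r_gt0; case: n n_ge2 => [//|n] _.
exists (layer_coord b_basis p r); split.
- exact: layer_coord_fin_supp.
- exact: layer_coordM.
- exact: layer_coord_eq0.
- exact: layer_coord_surj.
Qed.
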